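(* Let $p$ be a prime. (1) For natural numbers $m,n$: there exist integers $r,s\ge1$ and $\ell\in\mathbb{Z}$ with $m=p^r$, $n=p^s$ and $n-m=p^\ell(m-1)$ if and only if $m=p^r$ for some $r\geq1$ and $n=m^2$. (2) For integers $m,n$: there exist integers $r,s\geq1$, $\ell\in\mathbb{Z}$ and signs $\rho,\sigma,\lambda\in\{-1,1\}$ with $m=\rho p^r$, $n=\sigma p^s$ and $n-m=\lambda p^\ell(m-1)$ if and only if $m,n\in\{\pm p^h: h\geq1\}$ and either $n=m^2$, or $p=2$ and $(m,n)\in\{(-2,-8),(2,-2),(4,-2),(4,-8)\}$, or $p=3$ and $(m,n)=(3,-3)$. Equivalently, writing $\bar\theta(m,n)$ for the formula $P_0(m)\wedge P_0(n)\wedge R(m-1,n-m)$: in $\mathfrak{N}_p$ (with $P_0(n)$ being $R(1,n)\wedge n\geq 2$) it defines $\{(p^h,p^{2h}):h\geq1\}$, and in $\mathfrak{D}_p$ (with $P_0(n)$ being $R(1,n)\wedge T(n)$) it defines the set described in (2).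
   Context: For a prime $p$, $x\mid_p y$ (on $\mathbb{Z}$ or $\mathbb{N}$) means $y=\pm xp^s$ for some $s\in\mathbb{Z}$. $\mathfrak{N}_p=(\mathbb{N};0,1,+,\mid_p)$ with $R$ interpreted as $\mid_p$; $\mathfrak{D}_p=(\mathbb{Z};0,1,+,\mid,\mid_p,\mathbb{Z}\smallsetminus\{-1,0,1\})$ with $R$ interpreted as $\mid_p$ and $T$ as $\mathbb{Z}\smallsetminus\{-1,0,1\}$. The expressions $m-1$, $n-m$ are read as integer subtraction. *)

From mathcomp Require Import all_boot all_order all_algebra.
Set Implicit Arguments. Unset Strict Implicit. Unset Printing Implicit Defensive.
Import Order.TTheory GRing.Theory Num.Theory.

(* Since p does not divide m - 1 = +-p^r - 1, the exponent l is nonnegative, and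
   comparing the powers of p dividing both sides of n - m = +-p^l (m - 1) gives
   l = min(r, s) when r <> s.  Cancelling p^l leaves a linear relation with unit
   coefficients between p^r and p^|s-r|: either p^|s-r| = p^r, i.e. n = m^2, or
   the two powers differ by 2 (or p^s (p^|s-r| - 1) = 2), which forces them to be
   2 and 4.  When r = s, m - 1 divides 2 m and is coprime to m, so m - 1 divides 2
   and m is 2 or 3.  Over N all signs are +1 and the sporadic solutions, having
   n < 0, disappear. *)

From mathcomp Require Import all_boot all_order all_algebra.
Import Order.TTheory GRing.Theory Num.Theory.
From mathcomp Require Import zify ring.
Set Implicit Arguments.
Unset Strict Implicit.

Section PrimePowers.

Variable p : nat.
Hypothesis p_prime : prime p.

Lemma expn_prime_ge2 a : 0 < a -> 2 <= p ^ a.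
Proof.
move=> a_gt0; apply: leq_trans (prime_gt1 p_prime) _.
by rewrite -{1}(expn1 p); apply: leq_pexp2l (prime_gt0 p_prime) a_gt0.
Qed.

Lemma expn_eq_prime a q : 0 < a -> p ^ a = q -> prime q -> p = q.
Proof.
move=> a_gt0 E q_prime; apply/eqP; rewrite -dvdn_prime2 // -E.
by rewrite -{1}(expn1 p) dvdn_exp2l.
Qed.

Lemma prime_expn_add2 a b : 0 < a -> p ^ a + 2 = p ^ b ->
  [/\ p = 2, p ^ a = 2 & p ^ b = 4].
Proof.
move=> a_gt0 E.
have lt_ab : a < b by rewrite -(ltn_exp2l _ _ (prime_gt1 p_prime)) -E; lia.
have : p ^ a %| 2.
  by rewrite -(dvdn_addr _ (dvdnn (p ^ a))) E; apply/dvdn_exp2l/ltnW.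
move/(dvdn_leq (isT : 0 < 2)) => le2.
have pa2 : p ^ a = 2 by apply/eqP; rewrite eqn_leq le2 expn_prime_ge2.
by split => //; [exact: expn_eq_prime a_gt0 pa2 isT | rewrite -E pa2].
Qed.

End PrimePowers.

Local Open Scope ring_scope.

Lemma PoszX (n k : nat) : Posz (n ^ k)%N = (Posz n) ^+ k.
Proof. by rewrite -!natz natrX. Qed.

Lemma eq_pexpz_mul (P x y : int) (a b : nat) : P != 0 ->
  ~~ (P %| x)%Z -> ~~ (P %| y)%Z -> P ^+ a * x = P ^+ b * y -> a = b /\ x = y.
Proof.
move=> P_neq0; wlog le_ab : a b x y / (a <= b)%N => [W Px Py E|Px Py].
  by case: (leqP a b) => [/W|/ltnW/W]; [apply | move=> /(_ _ _ Py Px (esym E)) []].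
rewrite -(subnKC le_ab) exprD -mulrA => /(mulfI (expf_neq0 _ P_neq0)) E.
case Ed: (b - a)%N E => [|d] E; first by rewrite E expr0 mul1r addn0.
by rewrite E exprS -mulrA dvdz_mulr ?dvdzz in Px.
Qed.

Lemma intr_pexpz_mul_nonneg (p : nat) (A B l : int) :
  (0 < p)%N -> ~~ (p%:Z %| B)%Z ->
  (A%:~R : rat) = p%:R ^ l * B%:~R -> exists k : nat, A = p%:Z ^+ k * B.
Proof.
move=> p_gt0 pB; case: l => k E.
  by exists k; apply: (@intr_inj rat); rewrite E rmorphM /= rmorphXn.
have pk_neq0 : (p%:R : rat) ^+ k.+1 != 0 by rewrite expf_neq0 // pnatr_eq0 -lt0n.
have EB : B = A * p%:Z ^+ k.+1.
  apply: (@intr_inj rat); rewrite rmorphM /= rmorphXn /= E.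
  have -> : (p%:R : rat) ^ Negz k = (p%:R ^+ k.+1)^-1 by [].
  by rewrite mulrAC mulVf ?mul1r.
by rewrite EB dvdz_mull ?dvdz_exp ?dvdzz in pB.
Qed.

Lemma intr_pexp_mul (p k : nat) (A B : int) :
  A = p%:Z ^+ k * B -> (A%:~R : rat) = p%:R ^ k%:Z * B%:~R.
Proof. by move=> ->; rewrite rmorphM /= rmorphXn. Qed.

Definition square_or_sporadic (p : nat) (m n : int) : Prop :=
  n = m ^+ 2 \/
  (p = 2%N /\ ((m = -2 /\ n = -8) \/ (m = 2 /\ n = -2) \/
               (m = 4 /\ n = -2) \/ (m = 4 /\ n = -8))) \/
  (p = 3%N /\ m = 3 /\ n = -3).

Section SignedPrimePowers.

Variable p : nat.
Hypothesis p_prime : prime p.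
Local Notation P := (p%:Z).

Lemma prime_neq0z : P != 0.
Proof. by rewrite -lt0n prime_gt0. Qed.

Lemma sign_ndvd (rho : int) : rho = 1 \/ rho = -1 -> ~~ (P %| rho)%Z.
Proof. by move=> [|] ->; rewrite ?rpredN dvdz1 /= neq_ltn prime_gt1 ?orbT. Qed.

Lemma ndvd_pexp_add (a u : int) (d : nat) : (0 < d)%N -> ~~ (P %| u)%Z ->
  ~~ (P %| a * P ^+ d + u)%Z.
Proof. by move=> d_gt0; rewrite rpredDl // dvdz_mull // dvdz_exp. Qed.

Variables (r s k : nat) (rho sigma lam : int).
Hypotheses (r_gt0 : (0 < r)%N) (s_gt0 : (0 < s)%N).
Hypotheses (rho_sign : rho = 1 \/ rho = -1) (sigma_sign : sigma = 1 \/ sigma = -1)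
  (lam_sign : lam = 1 \/ lam = -1).
Hypothesis Etheta :
  sigma * P ^+ s - rho * P ^+ r = P ^+ k * (lam * (rho * P ^+ r - 1)).

Lemma cofactor_ndvd : ~~ (P %| lam * (rho * P ^+ r - 1))%Z.
Proof.
have : ~~ (P %| rho * P ^+ r - 1)%Z.
  by apply: ndvd_pexp_add => //; rewrite rpredN; apply: sign_ndvd; left.
by case: lam_sign => ->; rewrite ?mul1r ?mulN1r ?rpredN.
Qed.

Lemma theta_solution_lt : (r < s)%N ->
  square_or_sporadic p (rho * P ^+ r) (sigma * P ^+ s).
Proof.
move=> lt_rs; have d_gt0 : (0 < s - r)%N by rewrite subn_gt0.
have Es : (p ^ s = p ^ r * p ^ (s - r))%N by rewrite -expnD subnKC // ltnW.
have [_] : r = k /\ sigma * P ^+ (s - r) - rho = lam * (rho * P ^+ r - 1).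
  apply: eq_pexpz_mul prime_neq0z _ cofactor_ndvd _.
    by rewrite ndvd_pexp_add // rpredN sign_ndvd.
  by rewrite -Etheta -!PoszX Es PoszM; ring.
have := expn_prime_ge2 p_prime r_gt0; have := expn_prime_ge2 p_prime d_gt0.
rewrite -!PoszX Es PoszM.
case: rho_sign sigma_sign lam_sign => -> [] -> [] -> pd_ge2 pr_ge2 E;
  try by exfalso; lia.
- left; have -> : (p ^ (s - r) = p ^ r)%N by lia.
  ring.
- have /(prime_expn_add2 p_prime d_gt0) [p2 -> ->] : (p ^ (s - r) + 2 = p ^ r)%N.
    by lia.
  by right; left; split => //; do 3 right.
- left; have -> : (p ^ (s - r) = p ^ r)%N by lia.
  ring.
- have /(prime_expn_add2 p_prime r_gt0) [p2 -> ->] : (p ^ r + 2 = p ^ (s - r))%N.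
    by lia.
  by right; left; split => //; left.
Qed.

Lemma theta_solution_gt : (s < r)%N ->
  square_or_sporadic p (rho * P ^+ r) (sigma * P ^+ s).
Proof.
move=> lt_sr; have d_gt0 : (0 < r - s)%N by rewrite subn_gt0.
have Er : (p ^ r = p ^ s * p ^ (r - s))%N by rewrite -expnD subnKC // ltnW.
have [_] : s = k /\ sigma - rho * P ^+ (r - s) = lam * (rho * P ^+ r - 1).
  apply: eq_pexpz_mul prime_neq0z _ cofactor_ndvd _.
    by rewrite addrC -mulNr ndvd_pexp_add // sign_ndvd.
  by rewrite -Etheta -!PoszX Er PoszM; ring.
have le_pd : (2 * p ^ (r - s) <= p ^ r)%N.
  by rewrite Er leq_mul2r expn_prime_ge2 ?orbT.
have le_ps : (2 * p ^ s <= p ^ r)%N.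
  by rewrite Er mulnC leq_mul2l expn_prime_ge2 ?orbT.
have := expn_prime_ge2 p_prime s_gt0; have := expn_prime_ge2 p_prime d_gt0.
rewrite -!PoszX.
case: rho_sign sigma_sign lam_sign => -> [] -> [] -> pd_ge2 ps_ge2 E;
  try by exfalso; lia.
have [pr ps] : (p ^ r = 4 /\ p ^ s = 2)%N by lia.
right; left; split; first exact: (expn_eq_prime p_prime s_gt0 ps).
by rewrite pr ps; do 2 right; left.
Qed.

Lemma theta_solution_eq : r = s ->
  square_or_sporadic p (rho * P ^+ r) (sigma * P ^+ s).
Proof.
move=> Ers; move: Etheta; rewrite -Ers => E.
have cof_neq0 : lam * (rho * P ^+ r - 1) != 0.
  by apply: contraNneq cofactor_ndvd => ->; apply: dvdz0.
have Esigma : sigma = - rho.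
  have : sigma * P ^+ r - rho * P ^+ r != 0.
    by rewrite E mulf_neq0 ?expf_neq0 ?prime_neq0z.
  by case: rho_sign sigma_sign => -> [] ->; rewrite ?subrr ?eqxx.
have : (rho * P ^+ r - 1 %| - rho * 2)%Z.
  have cop : coprimez (rho * P ^+ r - 1) (P ^+ r).
    by apply/coprimezP; exists (-1, rho) => /=; ring.
  rewrite -(Gauss_dvdzl _ cop) (_ : _ * _ * _ = sigma * P ^+ r - rho * P ^+ r).
    by rewrite E !dvdz_mull.
  by rewrite Esigma; ring.
rewrite Esigma; have := expn_prime_ge2 p_prime r_gt0; rewrite -PoszX.
case: rho_sign => -> pr_ge2; rewrite dvdzE => /(@dvdn_leq _ 2 isT) le2; last by lia.
have [pr|pr] : (p ^ r = 2 \/ p ^ r = 3)%N by lia.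
  right; left; split; first exact: (expn_eq_prime p_prime r_gt0 pr).
  by rewrite pr; right; left.
by right; right; split; [exact: (expn_eq_prime p_prime r_gt0 pr) | rewrite pr].
Qed.

Lemma theta_solution : square_or_sporadic p (rho * P ^+ r) (sigma * P ^+ s).
Proof.
case: (ltngtP r s).
- exact: theta_solution_lt.
- exact: theta_solution_gt.
- exact: theta_solution_eq.
Qed.

End SignedPrimePowers.

Definition signed_ppower (p : nat) (m : int) : Prop :=
  exists h : nat, (1 <= h)%N /\ (m = (p%:Z) ^+ h \/ m = - (p%:Z) ^+ h).

Definition theta_nat (p m n : nat) : Prop :=
  exists (r s : nat) (l : int),
    (1 <= r)%N /\ (1 <= s)%N /\ m = (p ^ r)%N /\ n = (p ^ s)%N /\
    ((n%:Z - m%:Z)%:~R : rat) = (p%:R : rat) ^ l * ((m%:Z - 1)%:~R).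

Definition theta_int (p : nat) (m n : int) : Prop :=
  exists (r s : nat) (l : int) (rho sigma lambda : int),
    (1 <= r)%N /\ (1 <= s)%N /\
    (rho = 1 \/ rho = -1) /\ (sigma = 1 \/ sigma = -1) /\
    (lambda = 1 \/ lambda = -1) /\
    m = rho * (p%:Z) ^+ r /\ n = sigma * (p%:Z) ^+ s /\
    ((n - m)%:~R : rat) = lambda%:~R * (p%:R : rat) ^ l * ((m - 1)%:~R).

Lemma signed_ppowerP (p : nat) (m : int) :
  signed_ppower p m <->
  exists h (rho : int), [/\ (0 < h)%N, rho = 1 \/ rho = -1 & m = rho * p%:Z ^+ h].
Proof.
split => [[h [h_gt0 [->|->]]]|[h [rho [h_gt0 [->|->] ->]]]]; exists h.
- by exists 1; split => //; [left | rewrite mul1r].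
- by exists (-1); split => //; [right | rewrite mulN1r].
- by split => //; left; rewrite mul1r.
- by split => //; right; rewrite mulN1r.
Qed.

Lemma theta_int_of_eq (p : nat) (r s k : nat) (rho sigma lam : int) :
  (0 < r)%N -> (0 < s)%N ->
  rho = 1 \/ rho = -1 -> sigma = 1 \/ sigma = -1 -> lam = 1 \/ lam = -1 ->
  sigma * p%:Z ^+ s - rho * p%:Z ^+ r = p%:Z ^+ k * (lam * (rho * p%:Z ^+ r - 1)) ->
  theta_int p (rho * p%:Z ^+ r) (sigma * p%:Z ^+ s).
Proof.
move=> r_gt0 s_gt0 rho_sign sigma_sign lam_sign E.
exists r, s, k, rho, sigma, lam; do 7 (split => //).
by rewrite -mulrA mulrCA -rmorphM; apply: intr_pexp_mul.
Qed.

Lemma theta_int_solution (p : nat) (m n : int) : prime p -> theta_int p m n ->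
  signed_ppower p m /\ signed_ppower p n /\ square_or_sporadic p m n.
Proof.
move=> p_prime [r [s [l [rho [sigma [lam [r_gt0 [s_gt0 [rho_sign [sigma_sign
  [lam_sign [-> [-> E]]]]]]]]]]]]].
split; first by apply/signed_ppowerP; exists r, rho.
split; first by apply/signed_ppowerP; exists s, sigma.
rewrite -mulrA mulrCA -rmorphM in E.
have [k Ek] := intr_pexpz_mul_nonneg (prime_gt0 p_prime)
  (cofactor_ndvd p_prime rho r_gt0 lam_sign) E.
exact: theta_solution Ek.
Qed.

Lemma square_or_sporadic_theta_int (p : nat) (m n : int) :
  signed_ppower p m -> square_or_sporadic p m n -> theta_int p m n.
Proof.
move=> m_ppower [-> | [[-> spor] | [-> [-> ->]]]].
- move/signed_ppowerP: m_ppower => [h [rho [h_gt0 rho_sign ->]]].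
  have -> : (rho * p%:Z ^+ h) ^+ 2 = 1 * p%:Z ^+ (h + h).
    by rewrite exprMn exprD -expr2; case: rho_sign => ->; ring.
  apply: (@theta_int_of_eq p h (h + h) h rho 1 rho) => //.
  - by rewrite addn_gt0 h_gt0.
  - by left.
  by rewrite exprD; case: rho_sign => ->; ring.
- case: spor => [[-> ->]|[[-> ->]|[[-> ->]|[-> ->]]]].
  + by apply: (@theta_int_of_eq 2 1 3 1 (-1) (-1) 1) => //; [right | right | left].
  + by apply: (@theta_int_of_eq 2 1 1 2 1 (-1) (-1)) => //; [left | right | right].
  + by apply: (@theta_int_of_eq 2 2 1 1 1 (-1) (-1)) => //; [left | right | right].
  + by apply: (@theta_int_of_eq 2 2 3 2 1 (-1) (-1)) => //; [left | right | right].
by apply: (@theta_int_of_eq 3 1 1 1 1 (-1) (-1)) => //; [left | right | right].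
Qed.

Lemma theta_intP (p : nat) (m n : int) : prime p ->
  theta_int p m n <->
  signed_ppower p m /\ signed_ppower p n /\ square_or_sporadic p m n.
Proof.
move=> p_prime; split; first exact: theta_int_solution.
by case=> m_ppower [_]; apply: square_or_sporadic_theta_int.
Qed.

Lemma theta_natP (p m n : nat) : prime p ->
  theta_nat p m n <-> (exists r : nat, (1 <= r)%N /\ m = (p ^ r)%N) /\ n = (m ^ 2)%N.
Proof.
move=> p_prime; split=> [[r [s [l [r_gt0 [s_gt0 [Em [En E]]]]]]] | [[r [r_gt0 ->]] ->]].
  split; first by exists r.
  have := cofactor_ndvd p_prime 1 r_gt0 (or_introl erefl).
  rewrite !mul1r -PoszX -Em => m1_ndvd.
  have [k Ek] := intr_pexpz_mul_nonneg (prime_gt0 p_prime) m1_ndvd E.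
  have [] := theta_solution p_prime r_gt0 s_gt0 (or_introl erefl) (or_introl erefl)
    (or_introl erefl) (_ : _ = p%:Z ^+ k * (1 * (1 * p%:Z ^+ r - 1))).
  - by rewrite !mul1r -!PoszX -Em -En PoszX.
  - by rewrite !mul1r -!PoszX -Em -En => -[].
  by rewrite !mul1r -!PoszX -En; lia.
rewrite -expnM muln2 -addnn.
exists r, (r + r)%N, r; split => //; split; first by rewrite addn_gt0 r_gt0.
by do 2 split => //; apply: intr_pexp_mul; rewrite !PoszX exprD; ring.
Qed.

Theorem lemma4p4 (p : nat) (hp : prime p) :
  (forall m n : nat,
      (exists (r s : nat) (l : int),
          (1 <= r)%N /\ (1 <= s)%N /\ m = (p ^ r)%N /\ n = (p ^ s)%N /\
          ((n%:Z - m%:Z)%:~R : rat) = (p%:R : rat) ^ l * ((m%:Z - 1)%:~R))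
      <->
      ((exists r : nat, (1 <= r)%N /\ m = (p ^ r)%N) /\ n = (m ^ 2)%N))
  /\
  (forall m n : int,
      (exists (r s : nat) (l : int) (rho sigma lambda : int),
          (1 <= r)%N /\ (1 <= s)%N /\
          (rho = 1 \/ rho = -1) /\ (sigma = 1 \/ sigma = -1) /\
          (lambda = 1 \/ lambda = -1) /\
          m = rho * (p%:Z) ^+ r /\ n = sigma * (p%:Z) ^+ s /\
          ((n - m)%:~R : rat) = lambda%:~R * (p%:R : rat) ^ l * ((m - 1)%:~R))
      <->
      ((exists h : nat, (1 <= h)%N /\ (m = (p%:Z) ^+ h \/ m = - (p%:Z) ^+ h)) /\
       (exists h : nat, (1 <= h)%N /\ (n = (p%:Z) ^+ h \/ n = - (p%:Z) ^+ h)) /\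
       (n = m ^+ 2 \/
        (p = 2%N /\ ((m = -2 /\ n = -8) \/ (m = 2 /\ n = -2) \/
                     (m = 4 /\ n = -2) \/ (m = 4 /\ n = -8))) \/
        (p = 3%N /\ m = 3 /\ n = -3)))).
Proof.
by split => m n; [exact: theta_natP | exact: theta_intP].
Qed.
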